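(* Let $u$ be a vertex of an oriented graph $D$. (a) If $u$ is not a weak king, then $D$ contains a vertex $v$ such that $v(1\text{-}0)u$, $v$ is not a weak serf, and the arc $vu$ lies in no intransitive triple of $D$. (b) If $u$ is not a weak serf, then $D$ contains a vertex $w$ such that $u(1\text{-}0)w$, $w$ is not a weak king, and the arc $uw$ lies in no intransitive triple of $D$.
   Context: An oriented graph is a digraph with no loops and no pair of symmetric arcs. For vertices $u,v$ write $u(1\text{-}0)v$ if there is an arc from $u$ to $v$, and $u(0\text{-}0)v$ if there is no arc between $u$ and $v$. A vertex $v$ is weakly reachable within two steps from $u$ if $u(1\text{-}0)v$, or $u(0\text{-}0)v$, or for some vertex $w$ one has $u(1\text{-}0)w(1\text{-}0)v$, or $u(1\text{-}0)w(0\text{-}0)v$, or $u(0\text{-}0)w(1\text{-}0)v$. A vertex $u$ is a weak king if every other vertex is weakly reachable within two steps from $u$, and a weak serf if $u$ is weakly reachable within two steps from every other vertex. A triple is the induced oriented subgraph on three distinct vertices; it is intransitive if it is a directed 3-cycle $x(1\text{-}0)y(1\text{-}0)z(1\text{-}0)x$, or a directed path $x(1\text{-}0)y(1\text{-}0)z$ with $x(0\text{-}0)z$; all other triples are transitive. *)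

From mathcomp Require Import all_boot.
Set Implicit Arguments. Unset Strict Implicit. Unset Printing Implicit Defensive.

Definition oriented (V : finType) (e : rel V) : Prop :=
  (forall u, ~~ e u u) /\ (forall u v, e u v -> ~~ e v u).

Definition no_arc (V : finType) (e : rel V) (u v : V) : Prop :=
  u <> v /\ ~~ e u v /\ ~~ e v u.

Definition weakly_reach2 (V : finType) (e : rel V) (u v : V) : Prop :=
  e u v \/ no_arc e u v \/
  exists w : V,
    (e u w /\ e w v) \/ (e u w /\ no_arc e w v) \/ (no_arc e u w /\ e w v).

Definition weak_king (V : finType) (e : rel V) (u : V) : Prop :=
  forall v : V, v <> u -> weakly_reach2 e u v.

Definition weak_serf (V : finType) (e : rel V) (u : V) : Prop :=
  forall v : V, v <> u -> weakly_reach2 e v u.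

Definition intrans_pat (V : finType) (e : rel V) (x y z : V) : Prop :=
  (e x y /\ e y z /\ e z x) \/ (e x y /\ e y z /\ no_arc e x z).

Definition intransitive (V : finType) (e : rel V) (a b c : V) : Prop :=
  [/\ a <> b, b <> c & a <> c] /\
  (intrans_pat e a b c \/ intrans_pat e a c b \/ intrans_pat e b a c \/
   intrans_pat e b c a \/ intrans_pat e c a b \/ intrans_pat e c b a).

Definition arc_in_no_intrans (V : finType) (e : rel V) (a b : V) : Prop :=
  forall c : V, c <> a -> c <> b -> ~ intransitive e a b c.

From mathcomp Require Import all_boot.
From Stdlib Require Import Classical.

(* If [b] is not weakly reachable within two steps from [a], the two-step
   conditions force [b -> a], every out-neighbour of [a] to be an out-neighbour
   of [b], and every in-neighbour of [b] to be an in-neighbour of [a].  An arc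
   [x -> u] whose head's out-neighbours and tail's in-neighbours are inherited
   this way lies in no intransitive triple, since every directed 2-path through
   [x] and [u] is then closed by a forward arc.  Taking for [b] a vertex that
   witnesses the failure of the king (resp. serf) property gives both parts. *)

Section OrientedGraph.

Context {V : finType} {e : rel V}.

Lemma not_weakly_reach2 {a b} :
  a <> b -> ~ weakly_reach2 e a b ->
  [/\ e b a, forall c, e a c -> e b c & forall c, e c b -> e c a].
Proof.
move=> neq_ab unreach.
have neab : ~~ e a b by apply/negP=> eab; apply: unreach; left.
split.
- apply/negPn/negP=> neba; apply: unreach; right; left; by split.
- move=> c eac; apply/negPn/negP=> nebc.
  have necb : ~~ e c b by apply/negP=> ecb; apply: unreach; do 2 right; exists c; left.
  apply: unreach; do 2 right; exists c; right; left; split=> //; split=> //.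
  by move=> eq_cb; move: eac; rewrite eq_cb (negbTE neab).
- move=> c ecb; apply/negPn/negP=> neca.
  have neac : ~~ e a c by apply/negP=> eac; apply: unreach; do 2 right; exists c; left.
  apply: unreach; do 2 right; exists c; do 2 right; split=> //; split=> //.
  by move=> eq_ac; move: ecb; rewrite -eq_ac (negbTE neab).
Qed.

Lemma not_weak_king_witness u :
  ~ weak_king e u -> exists2 x, x <> u & ~ weakly_reach2 e u x.
Proof.
case/not_all_ex_not=> x not_reach_x.
by have [neq_xu unreach] := imply_to_and _ _ not_reach_x; exists x.
Qed.

Lemma not_weak_serf_witness u :
  ~ weak_serf e u -> exists2 x, x <> u & ~ weakly_reach2 e x u.
Proof.
case/not_all_ex_not=> x not_reach_x.
by have [neq_xu unreach] := imply_to_and _ _ not_reach_x; exists x.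
Qed.

Hypothesis e_oriented : oriented e.

Lemma oriented_asym {x y} : e x y -> ~~ e y x.
Proof. by case: e_oriented => _; apply. Qed.

Lemma intrans_patE x y z :
  x <> z -> intrans_pat e x y z <-> [&& e x y, e y z & ~~ e x z].
Proof.
move=> neq_xz; split.
- case=> [[-> [-> /oriented_asym ->]] | [-> [-> [_ [-> _]]]]] //.
- case/and3P=> exy eyz nexz.
  case ezx: (e z x); first by left.
  by right; split; [|split; [|split; [|split; [|rewrite ezx]]]].
Qed.

Lemma arc_in_no_intrans_of_inherited x u :
  e x u -> (forall c, e u c -> e x c) -> (forall c, e c x -> e c u) ->
  arc_in_no_intrans e x u.
Proof.
move=> exu out_u in_x c neq_cx neq_cu [[neq_xu _ _] pats].
have /negbTE neux := oriented_asym exu.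
move: pats; rewrite !intrans_patE //; try by move=> /esym.
rewrite neux exu !andbF /=.
case=> [/andP[euc] | [// | [// | [/and3P[euc ecx _] | [/andP[ecx] | //]]]]].
- by rewrite out_u.
- by move: (oriented_asym ecx); rewrite out_u.
- by rewrite in_x.
Qed.

End OrientedGraph.

Theorem lemma1 (V : finType) (e : rel V) (u : V) :
  oriented e ->
  (~ weak_king e u ->
     exists v : V, e v u /\ ~ weak_serf e v /\ arc_in_no_intrans e v u) /\
  (~ weak_serf e u ->
     exists w : V, e u w /\ ~ weak_king e w /\ arc_in_no_intrans e u w).
Proof.
move=> ori; split.
- case/not_weak_king_witness=> x neq_xu unreach.
  have [exu out_u in_x] := not_weakly_reach2 (nesym neq_xu) unreach.
  exists x; split=> //; split; first by move/(_ u (nesym neq_xu)).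
  exact: (arc_in_no_intrans_of_inherited ori).
- case/not_weak_serf_witness=> x neq_xu unreach.
  have [eux out_x in_u] := not_weakly_reach2 neq_xu unreach.
  exists x; split=> //; split; first by move/(_ u (nesym neq_xu)).
  exact: (arc_in_no_intrans_of_inherited ori).
Qed.
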